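(* For every prime power $k$, the graph $G_k$ satisfies $c(G_k) = k$, $c_{V,\mathrm{r}}(G_k) \leq k+1$ and $c_E(G_k) \geq k(k-1)$.
   Context: A Latin square of order $k$ is a partition $L = L(1) \cup \dots \cup L(k)$ of $A = [k]\times[k]$ such that each row $A[i,\cdot] = \{(i,j) : j \in [k]\}$ and each column meets each part $L(n)$ in exactly one position. Two Latin squares $L_1, L_2$ of order $k$ are orthogonal if $|L_1(n_1)\cap L_2(n_2)| = 1$ for all $n_1,n_2\in[k]$. For a prime power $k$, fix $k-1$ mutually orthogonal Latin squares $L_1,\dots,L_{k-1}$ of order $k$. Let $R = \{A[i,\cdot] : i \in [k]\}$ and $\mathcal{L} = \{L_s(n) : s \in [k-1], n \in [k]\}$. The graph $G_k$ has vertex set $A \cup R \cup \mathcal{L}$ and an edge between $p \in A$ and $S \in R \cup \mathcal{L}$ whenever $p \in S$; no other edges. Games: players alternate turns, cops first; initially the cop player places all cops, then the robber is placed on a vertex (several pieces may share a position). In a turn each piece of the moving player may stay or make one move (no obligation to move). The robber sits on vertices and moves to adjacent vertices; $v_r$ is his current vertex. Classical version: cops on vertices moving to adjacent vertices; cops win if a cop is on $v_r$; $c(G)$ is the least number of cops forcing a win in finitely many turns. Restrictive vertex version: cops on vertices; cops win when every neighbor of $v_r$ is occupied by a cop; after each robber turn (including initial placement) no cop may be on $v_r$, in particular the robber may not move onto a cop-occupied vertex, and if a cop moves onto $v_r$ the robber must leave in his next turn; number $c_{V,\mathrm{r}}(G)$. Edge version: cops sit on edges; a cop on edge $e$ may move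 to any edge sharing an endpoint with $e$; cops win when every edge incident to $v_r$ is occupied by a cop; number $c_E(G)$. *)

From mathcomp Require Import all_boot.
Set Implicit Arguments.
Unset Strict Implicit.
Unset Printing Implicit Defensive.

(* Game positions where the cops are about to move: cop configuration C (m
   pieces, each in positions of type P) and robber vertex r.
   cops_force C r  <->  the cops can force a win in finitely many turns
   from this position (inductive = well-founded game tree). *)
Inductive cops_force (T P : Type) (m : nat)
  (cmove : P -> P -> Prop)
  (rmove : ('I_m -> P) -> T -> T -> Prop)     (* legal robber move, given the
                                                 cops' (new) configuration *)
  (won : ('I_m -> P) -> T -> Prop)
  : ('I_m -> P) -> T -> Prop :=
| force_now C r : won C r -> cops_force cmove rmove won C r
| force_step C r (C' : 'I_m -> P) :
    (forall i, cmove (C i) (C' i)) ->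
    (won C' r \/ forall r', rmove C' r r' -> cops_force cmove rmove won C' r') ->
    cops_force cmove rmove won C r.

Definition cops_win (T P : Type) (m : nat) (cvalid : P -> Prop)
  (cmove : P -> P -> Prop) (rplace : ('I_m -> P) -> T -> Prop)
  (rmove : ('I_m -> P) -> T -> T -> Prop) (won : ('I_m -> P) -> T -> Prop) :=
  exists C0 : 'I_m -> P, (forall i, cvalid (C0 i)) /\
    forall r0, rplace C0 r0 -> cops_force cmove rmove won C0 r0.

Definition classical_win (T : finType) (e : rel T) (m : nat) : Prop :=
  @cops_win T T m (fun _ => True) (fun x y => y = x \/ e x y)
    (fun _ _ => True) (fun _ r r' => r' = r \/ e r r')
    (fun C r => exists i, C i = r).

Definition restrictive_win (T : finType) (e : rel T) (m : nat) : Prop :=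
  @cops_win T T m (fun _ => True) (fun x y => y = x \/ e x y)
    (fun C r => forall i, C i <> r)
    (fun C r r' => (r' = r \/ e r r') /\ forall i, C i <> r')
    (fun C r => forall y, e r y -> exists i, C i = y).

Definition is_edge (T : finType) (e : rel T) (E : {set T}) : Prop :=
  exists x y, e x y /\ E = [set x; y].

Definition edge_win (T : finType) (e : rel T) (m : nat) : Prop :=
  @cops_win T {set T} m (is_edge e)
    (fun E E' => E' = E \/ (is_edge e E' /\ exists x, x \in E /\ x \in E'))
    (fun _ _ => True) (fun _ r r' => r' = r \/ e r r')
    (fun C r => forall y, e r y -> exists i, C i = [set r; y]).

Definition copnum_eq (win : nat -> Prop) (n : nat) : Prop :=
  win n /\ forall m, m < n -> ~ win m.
Definition copnum_le (win : nat -> Prop) (n : nat) : Prop :=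
  exists m, m <= n /\ win m.
Definition copnum_ge (win : nat -> Prop) (n : nat) : Prop :=
  forall m, m < n -> ~ win m.

Definition prime_power (k : nat) : Prop :=
  exists p n, prime p /\ 0 < n /\ k = p ^ n.

(* A Latin square of order k is given by the labelling L : [k]x[k] -> [k];
   its part L(n) is the set of cells labelled n. *)
Definition part (k : nat) (L : 'I_k -> 'I_k -> 'I_k) (n : 'I_k) : {set 'I_k * 'I_k} :=
  [set p | L p.1 p.2 == n].

Definition latin (k : nat) (L : 'I_k -> 'I_k -> 'I_k) : Prop :=
  (forall i n, #|[set p in part L n | p.1 == i]| = 1) /\
  (forall j n, #|[set p in part L n | p.2 == j]| = 1).

Definition orthogonal (k : nat) (L1 L2 : 'I_k -> 'I_k -> 'I_k) : Prop :=
  forall n1 n2, #|part L1 n1 :&: part L2 n2| = 1.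

(* Vertices: A = [k]x[k], R (rows, indexed by i), and the parts L_s(n),
   indexed by (s, n) with s in [k-1], n in [k]. *)
Notation Gvert k := (('I_k * 'I_k) + ('I_k + ('I_k.-1 * 'I_k)))%type.

Definition incid (k : nat) (Ls : 'I_k.-1 -> 'I_k -> 'I_k -> 'I_k)
  (p : 'I_k * 'I_k) (X : 'I_k + ('I_k.-1 * 'I_k)) : bool :=
  match X with
  | inl i => p.1 == i
  | inr (s, n) => p \in part (Ls s) n
  end.

Definition Gadj (k : nat) (Ls : 'I_k.-1 -> 'I_k -> 'I_k -> 'I_k) : rel (Gvert k) :=
  fun v w =>
    match v, w with
    | inl p, inr X => incid Ls p X
    | inr X, inl p => incid Ls p X
    | _, _ => false
    end.

(* G_k is the point-line incidence graph of an affine plane of order k from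
   which the parallel class of columns has been removed: it is bipartite and
   k-regular, and two points share at most one line, so its girth is at least 6.
   Seen from a vertex v, the branches (w together with its neighbours other
   than v) of two distinct neighbours w of v are then disjoint and not joined by an edge, so a vertex cop lies in, and an edge cop
   meets, at most one branch.  Hence a robber facing fewer than k cops can
   always step to a neighbour whose branch holds no cop, and against fewer than
   k(k-1) edge cops to one whose branch is met by fewer than k-1 cops; the k-1
   edges at his new vertex leading away from his old one can then not all be
   occupied after the next move.  Conversely k cops on the rows reach any point,
   or all k cells of a Latin part, in one move; in the restrictive game an extra
   cop walks onto a robber resting on a point and drives him onto a part. *)

From mathcomp Require Import all_boot.
Set Implicit Arguments.
Unset Strict Implicit.
Unset Printing Implicit Defensive.

Lemma robber_evades (T P : Type) (m : nat) (cmove : P -> P -> Prop)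
    (rmove : ('I_m -> P) -> T -> T -> Prop) (won : ('I_m -> P) -> T -> Prop)
    (Inv : ('I_m -> P) -> T -> Prop) :
  (forall C r, Inv C r -> ~ won C r) ->
  (forall C r C', Inv C r -> (forall i, cmove (C i) (C' i)) ->
     ~ won C' r /\ exists2 r', rmove C' r r' & Inv C' r') ->
  forall C r, Inv C r -> ~ cops_force cmove rmove won C r.
Proof.
move=> Inv_safe Inv_step; rewrite /not; fix IH 4 => C r Inv_Cr force_Cr.
case: force_Cr Inv_Cr => [{}C {}r won_Cr | {}C {}r C' moveC respond] Inv_Cr.
  exact: Inv_safe Inv_Cr won_Cr.
have [not_won [r' move_r Inv_C'r']] := Inv_step _ _ _ Inv_Cr moveC.
by case: respond => [// | force_C']; apply: IH Inv_C'r' (force_C' r' move_r).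
Qed.

Section GirthSix.

Variables (T : finType) (e : rel T) (side : T -> bool).

Definition nbhd (v : T) : {set T} := [set w | e v w].

Definition branch (v w : T) : {set T} := w |: (nbhd w :\ v).

Hypothesis e_sym : symmetric e.
Hypothesis e_side : forall x y, e x y -> side y = ~~ side x.
Hypothesis common_nbhd_le1 : forall a b, a != b -> #|nbhd a :&: nbhd b| <= 1.

Lemma same_side_nonadj x y : side x = side y -> ~~ e x y.
Proof. by move=> Exy; apply/negP => /e_side; rewrite Exy; case: (side y). Qed.

Lemma common_nbr_eq a b c d : a != b -> e a c -> e b c -> e a d -> e b d -> c = d.
Proof.
move=> ab ac bc ad bd.
by apply: (card_le1_eqP (common_nbhd_le1 ab)); rewrite !inE ?ac ?bc ?ad ?bd.
Qed.

(* A shared vertex or a joining edge would close a cycle of length 3, 4 or 5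
   through [v]. *)
Lemma branch_sep v w1 w2 y1 y2 : e v w1 -> e v w2 ->
  y1 \in branch v w1 -> y2 \in branch v w2 -> (y1 == y2) || e y1 y2 -> w1 = w2.
Proof.
move=> vw1 vw2; have side_w2 : side w2 = side w1 by rewrite (e_side vw1) (e_side vw2).
have mixed w w' y : e v w -> e v w' -> y != v -> e w' y -> (w == y) || e w y -> w = w'.
  move=> vw vw' yv w'y /orP[/eqP wy | wy].
    by move: w'y; rewrite -wy => /e_side; rewrite (e_side vw) (e_side vw'); case: (side v).
  by apply: (common_nbr_eq (a := v) (b := y)); rewrite 1?eq_sym // e_sym.
rewrite !inE => /predU1P[-> | /andP[y1v w1y1]] /predU1P[-> | /andP[y2v w2y2]].
- case/orP => [/eqP // | w12].
  by move: (same_side_nonadj (esym side_w2)); rewrite w12.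
- exact: mixed.
- by move=> h; apply/esym/(mixed w2 w1 y1); rewrite // eq_sym e_sym.
- case/orP => [/eqP y12 | y12].
    have vy1 : v != y1 by rewrite eq_sym.
    by apply: (common_nbr_eq vy1); rewrite // e_sym // y12.
  have := same_side_nonadj (x := y1) (y := y2).
  by rewrite y12 (e_side w1y1) (e_side w2y2) side_w2 => /(_ erefl).
Qed.

Variable k : nat.
Hypothesis nbhd_min : forall v, k <= #|nbhd v|.

(* Double counting of the pairs (item, neighbour of [v] that it hits). *)
Lemma light_neighbour m t v (hit : 'I_m -> T -> bool) :
    (forall i w1 w2, e v w1 -> e v w2 -> hit i w1 -> hit i w2 -> w1 = w2) ->
  m < k * t -> exists2 w, e v w & #|[set i | hit i w]| < t.
Proof.
move=> hit1 ltm; case: (pickP [pred w | e v w & #|[set i | hit i w]| < t]).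
  by move=> w /andP[]; exists w.
move=> heavy; suff : k * t <= m by rewrite leqNgt ltm.
have hits_le1 i : #|[set w in nbhd v | hit i w]| <= 1.
  apply/card_le1_eqP => w1 w2; rewrite !inE => /andP[vw1 h1] /andP[vw2 h2].
  exact: hit1 vw2 vw1 h2 h1.
apply: (@leq_trans (\sum_(w in nbhd v) #|[set i | hit i w]|)).
  apply: (@leq_trans (#|nbhd v| * t)); first by rewrite leq_mul2r nbhd_min orbT.
  rewrite -sum_nat_const; apply: leq_sum => w; rewrite inE => vw.
  by have := heavy w; rewrite /= vw /= => /negbT; rewrite -leqNgt.
under eq_bigr => w _ do rewrite -sum1dep_card.
rewrite (exchange_big_dep predT) //=.
apply: (@leq_trans (\sum_(i < m) 1)); last by rewrite sum1_card card_ord.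
by apply: leq_sum => i _; rewrite sum1dep_card hits_le1.
Qed.

Lemma free_neighbour m v (hit : 'I_m -> T -> bool) :
    (forall i w1 w2, e v w1 -> e v w2 -> hit i w1 -> hit i w2 -> w1 = w2) ->
  m < k -> exists2 w, e v w & forall i, ~~ hit i w.
Proof.
move=> hit1; rewrite -[k]muln1 => /(light_neighbour hit1)[w vw].
rewrite ltnS leqn0 cards_eq0 => /eqP/setP none; exists w => // i.
by have := none i; rewrite !inE => ->.
Qed.

Lemma unoccupied_vertex (x0 : T) m (C : 'I_m -> T) :
  m < k -> exists v, forall i, C i != v.
Proof.
move=> ltm; case: (@free_neighbour m x0 (fun i w => C i == w) _ ltm).
  by move=> i w1 w2 _ _ /eqP <- /eqP <-.
by move=> v _ free; exists v.
Qed.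

Lemma classical_escape m (C : 'I_m -> T) v : m < k -> (forall i, C i != v) ->
  exists2 w, e v w & forall i, C i \notin w |: nbhd w.
Proof.
move=> ltm offv; case: (@free_neighbour m v (fun i w => C i \in branch v w) _ ltm).
  by move=> i w1 w2 vw1 vw2 h1 h2; apply: branch_sep vw1 vw2 h1 h2 _; rewrite eqxx.
by move=> w vw free; exists w => // i; have := free i; rewrite !inE offv.
Qed.

Lemma classical_lower (x0 : T) m : m < k -> ~ classical_win e m.
Proof.
move=> ltm [C0 [_ C0_wins]].
have [v offv] := unoccupied_vertex x0 C0 ltm.
have [w _ safe_w] := classical_escape ltm offv.
apply: (robber_evades (Inv := fun C r => forall i, C i \notin r |: nbhd r))
  safe_w (C0_wins w I).
  by move=> C r safe [i Cir]; have := safe i; rewrite Cir setU11.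
move=> C r C' safe moveC.
have offr i : C' i != r.
  have := safe i; rewrite !inE negb_or => /andP[Cir rCi].
  by case: (moveC i) => [-> // | CC']; apply: contraNneq rCi => <-; rewrite e_sym.
split; first by case=> i /eqP; apply/negP.
by have [r' rr' safe'] := classical_escape ltm offr; exists r' => //; right.
Qed.

Lemma edge_meets_one_branch E v w1 w2 : is_edge e E -> e v w1 -> e v w2 ->
  E :&: branch v w1 != set0 -> E :&: branch v w2 != set0 -> w1 = w2.
Proof.
case=> a [b [ab ->]] vw1 vw2 /set0Pn[y1 /setIP[Ey1 b1]] /set0Pn[y2 /setIP[Ey2 b2]].
apply: branch_sep vw1 vw2 b1 b2 _.
by move: Ey1 Ey2; rewrite !inE => /orP[]/eqP-> /orP[]/eqP->; rewrite ?eqxx ?ab ?orbT // e_sym ab orbT.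
Qed.

Lemma edge_escape m (C : 'I_m -> {set T}) v : (forall i, is_edge e (C i)) ->
  m < k * (k - 1) -> exists2 w, e v w & #|[set i | C i :&: branch v w != set0]| < k - 1.
Proof.
move=> edgeC; apply: light_neighbour => i w1 w2 vw1 vw2.
exact: edge_meets_one_branch (edgeC i) vw1 vw2.
Qed.

(* Each of the [k - 1] edges [r y], [y != u], must be reached in one move by
   its own cop, which therefore already meets the branch of [r] seen from [u]. *)
Lemma edge_not_won m (C C' : 'I_m -> {set T}) r u : e r u ->
    (forall i, exists x, x \in C i /\ x \in C' i) ->
    #|[set i | C i :&: branch u r != set0]| < k - 1 ->
  ~ (forall y, e r y -> exists i, C' i = [set r; y]).
Proof.
move=> ru meet few won.
pose other i := odflt r [pick y in C' i :\ r].
have cover : nbhd r :\ u \subset other @: [set i | C i :&: branch u r != set0].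
  apply/subsetP => y; rewrite !inE => /andP[yu ry]; have [i C'i] := won y ry.
  have yr : y != r by apply: contraTneq ry => ->; rewrite (same_side_nonadj erefl).
  apply/imsetP; exists i.
    have [x [xC xC']] := meet i; rewrite inE; apply/set0Pn; exists x.
    by move: xC'; rewrite C'i !inE xC => /orP[]/eqP->; rewrite ?eqxx // yu ry orbT.
  by rewrite /other C'i setU1K ?pick_set1 // inE eq_sym.
have := nbhd_min r; rewrite (cardsD1 u) inE ru -leq_subLR => many.
have := leq_trans (subset_leq_card cover) (leq_imset_card _ _).
by rewrite leqNgt (leq_trans few many).
Qed.

Lemma edge_lower (x0 : T) m : m < k * (k - 1) -> ~ edge_win e m.
Proof.
move=> ltm [C0 [edgeC0 C0_wins]].
have [w x0w few] := edge_escape x0 edgeC0 ltm.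
apply: (robber_evades (Inv := fun C r => (forall i, is_edge e (C i)) /\
    exists2 u, e r u & #|[set i | C i :&: branch u r != set0]| < k - 1))
  _ _ (C0_wins w I).
- move=> C r [edgeC [u ru {}few]]; apply: edge_not_won ru _ few => i.
  by have [a [b [_ ->]]] := edgeC i; exists a; rewrite setU11.
- move=> C r C' [edgeC [u ru {}few]] moveC.
  have edgeC' i : is_edge e (C' i) by case: (moveC i) => [-> | []].
  have meet i : exists x, x \in C i /\ x \in C' i.
    case: (moveC i) => [-> | [_ //]].
    by have [a [b [_ ->]]] := edgeC i; exists a; rewrite setU11.
  split; first exact: edge_not_won ru meet few.
  have [r' rr' {}few] := edge_escape r edgeC' ltm.
  by exists r'; [right | split; last exists r; rewrite // e_sym].
- by split; last exists x0; rewrite // e_sym.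
Qed.

End GirthSix.

Lemma card_le_nbhd (T A : finType) (e : rel T) (f : A -> T) v :
  injective f -> (forall x, e v (f x)) -> #|A| <= #|nbhd e v|.
Proof.
move=> inj_f vf; rewrite -(card_imset _ inj_f).
by apply/subset_leq_card/subsetP => _ /imsetP[x _ ->]; rewrite inE.
Qed.

Section LatinSquare.

Variable k : nat.
Implicit Type L : 'I_k -> 'I_k -> 'I_k.

Definition cell L (n i : 'I_k) : 'I_k * 'I_k := (i, odflt i [pick j | L i j == n]).

Lemma part_row_inj L n : latin L -> {in part L n &, injective fst}.
Proof.
case=> rows _ p q pn qn pq; have /eqP/cards1P[x px] := rows p.1 n.
have : p \in [set p0 in part L n | p0.1 == p.1] by rewrite inE pn eqxx.
have : q \in [set p0 in part L n | p0.1 == p.1] by rewrite inE qn pq eqxx.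
by rewrite px !inE => /eqP -> /eqP ->.
Qed.

Lemma cell_part L n i : latin L -> cell L n i \in part L n.
Proof.
case=> rows _; rewrite inE /cell /=; case: pickP => [j // | none].
have /eqP/cards1P[p /setP/(_ p)] := rows i n.
by rewrite !inE eqxx => /andP[pn /eqP pi]; move: (none p.2); rewrite -pi pn.
Qed.

Lemma cellE L n p : latin L -> p \in part L n -> cell L n p.1 = p.
Proof. by move=> lat pn; apply: (part_row_inj lat) (cell_part n p.1 lat) pn _. Qed.

End LatinSquare.

Section LatinGraph.

Variables (k : nat) (Ls : 'I_k.-1 -> 'I_k -> 'I_k -> 'I_k).
Hypothesis Ls_latin : forall s, latin (Ls s).
Hypothesis Ls_orth : forall s t, s != t -> orthogonal (Ls s) (Ls t).
Hypothesis k_gt1 : 1 < k.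

Local Notation V := (Gvert k).
Local Notation e := (Gadj Ls).
Local Notation point p := (inl p : V).
Local Notation row i := (inr (inl i) : V).
Local Notation line s n := (inr (inr (s, n)) : V).

Lemma Gadj_sym : symmetric e.
Proof. by case=> [p|X] [q|Y]. Qed.

Definition is_line (x : V) := if x is inr _ then true else false.

Lemma Gadj_side x y : e x y -> is_line y = ~~ is_line x.
Proof. by case: x y => [p|X] [q|Y]. Qed.

Lemma incid_rect p q X Y : incid Ls p X -> incid Ls q X ->
  incid Ls p Y -> incid Ls q Y -> (p == q) || (X == Y).
Proof.
case: X Y => [i|[s n]] [j|[t m]] /=.
- by move=> /eqP <- _ /eqP <-; rewrite eqxx orbT.
- move=> /eqP pi /eqP qi pm qm.
  by rewrite (part_row_inj (Ls_latin t) pm qm) ?eqxx // pi qi.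
- move=> pn qn /eqP pj /eqP qj.
  by rewrite (part_row_inj (Ls_latin s) pn qn) ?eqxx // pj qj.
case: (eqVneq s t) => [<- | st].
  by rewrite !inE => /eqP pn _ /eqP pm _; rewrite -pn -pm eqxx orbT.
move=> ps qs pt qt; have /eqP/cards1P[x sx] := Ls_orth st n m.
have : p \in part (Ls s) n :&: part (Ls t) m by rewrite in_setI ps pt.
have : q \in part (Ls s) n :&: part (Ls t) m by rewrite in_setI qs qt.
by rewrite sx !in_set1 => /eqP -> /eqP ->; rewrite eqxx.
Qed.

Lemma Gadj_common_nbhd a b : a != b -> #|nbhd e a :&: nbhd e b| <= 1.
Proof.
move=> ab; apply/card_le1_eqP => c d; rewrite !inE => /andP[ac bc] /andP[ad bd].
case: a b c d ab ac bc ad bd => [p|X] [q|Y] [c|c] [d|d] //= pq pc qc pd qd.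
  by case/orP: (incid_rect pc qc pd qd) => /eqP E; rewrite E ?eqxx in pq *.
by case/orP: (incid_rect pc pd qc qd) => /eqP E; rewrite E ?eqxx in pq *.
Qed.

Lemma Gadj_nbhd_min v : k <= #|nbhd e v|.
Proof.
case: v => [p | [i | [s n]]].
- pose f o : V := if o is Some s then line s (Ls s p.1 p.2) else row p.1.
  apply: (@leq_trans #|{: option 'I_k.-1}|).
    by rewrite card_option card_ord prednK // ltnW.
  by apply: (@card_le_nbhd _ _ _ f) => [[s|] [t|] //= [->] // | [s|]]; rewrite /= ?inE.
- apply: (@leq_trans #|'I_k|); first by rewrite card_ord.
  by apply: (@card_le_nbhd _ _ _ (fun j => point (i, j))) => [j j' [] | j /=].
- apply: (@leq_trans #|'I_k|); first by rewrite card_ord.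
  apply: (@card_le_nbhd _ _ _ (fun i => point (cell (Ls s) n i))) => [i j [] // | i].
  exact: cell_part.
Qed.

Lemma classical_upper : classical_win e k.
Proof.
exists (fun i => row i); split=> // -[p | [i | [s n]]] _.
- apply: (force_step (C' := fun i => if i == p.1 then point p else row i)).
    by move=> i; case: eqVneq => [-> | _]; [right; rewrite /= eqxx | left].
  by left; exists p.1; rewrite eqxx.
- by apply: force_now; exists i.
pose on_cells i := point (cell (Ls s) n i).
apply: (force_step (C' := on_cells)); first by move=> i; right; rewrite /= eqxx.
right=> r' [-> | ].
  apply: (force_step (C' := fun=> line s n)); first by move=> i; right; apply: cell_part.
  by left; exists (Ordinal (ltnW k_gt1)).
by case: r' => [q qn | //]; apply: force_now; exists q.1; rewrite /on_cells cellE.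
Qed.

(* In the restrictive game, cop [lift ord_max i] keeps row [i] and cop
   [ord_max] hunts a robber sitting on a point. *)
Definition row_cops (C : 'I_k.+1 -> V) := forall i, C (lift ord_max i) = row i.

Local Notation restrictive_force := (@cops_force V V k.+1
  (fun x y => y = x \/ e x y)
  (fun C r r' => (r' = r \/ e r r') /\ forall i, C i <> r')
  (fun C r => forall y, e r y -> exists i, C i = y)).

Lemma restrictive_line C s n : row_cops C -> restrictive_force C (line s n).
Proof.
move=> rowC; pose C' j := if unlift ord_max j is Some i then point (cell (Ls s) n i) else C j.
apply: (force_step (C' := C')).
  by move=> j; rewrite /C'; case: unliftP => [i -> | _]; [right; rewrite rowC /= eqxx | left].
left=> -[q qn | //]; exists (lift ord_max q.1).
by rewrite /C' liftK cellE.
Qed.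

Lemma restrictive_leave_point C p r' : row_cops C -> e (point p) r' ->
  (forall j, C j <> r') -> restrictive_force C r'.
Proof.
move=> rowC; case: r' => [// | [i _ off | [s n] _ _]]; last exact: restrictive_line.
by case: (off (lift ord_max i)).
Qed.

Lemma restrictive_chase C p (walk : seq V) : row_cops C ->
  path e (C ord_max) walk -> last (C ord_max) walk = point p ->
  restrictive_force C (point p).
Proof.
elim: walk C => [|x walk IH] C rowC /=.
  move=> _ Cp; apply: (force_step (C' := C)); first by left.
  right=> r' [[-> | pr'] off]; first by case: (off ord_max).
  exact: restrictive_leave_point pr' off.
case/andP=> Cx walk_x last_p; pose C' j := if j == ord_max then x else C j.
have rowC' : row_cops C'.
  by move=> i; rewrite /C' eq_sym (negbTE (neq_lift _ _)).
have C'x : C' ord_max = x by rewrite /C' eqxx.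
apply: (force_step (C' := C')).
  by move=> j; rewrite /C'; case: eqVneq => [-> | _]; [right | left].
right=> r' [[-> | pr'] off]; last exact: restrictive_leave_point pr' off.
by apply: IH; rewrite // C'x.
Qed.

Lemma restrictive_upper : restrictive_win e k.+1.
Proof.
pose i0 : 'I_k := Ordinal (ltnW k_gt1).
pose C0 j := if unlift ord_max j is Some i then row i else row i0.
have rowC0 : row_cops C0 by move=> i; rewrite /C0 liftK.
exists C0; split=> // -[p | [i | [s n]]] off; last exact: restrictive_line.
  have s0 : 'I_k.-1 by exists 0; rewrite ltn_predRL.
  pose n0 := Ls s0 p.1 p.2.
  apply: (@restrictive_chase _ _ [:: point (cell (Ls s0) n0 i0); line s0 n0; point p]) => //.
  by rewrite /C0 unlift_none /= cell_part // inE /n0 eqxx.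
by case: (off (lift ord_max i)); rewrite rowC0.
Qed.

End LatinGraph.

Lemma prime_power_gt1 k : prime_power k -> 1 < k.
Proof.
case=> p [n [p_pr [n_gt0 ->]]].
by rewrite (leq_trans (prime_gt1 p_pr)) // -{1}(expn1 p) leq_pexp2l // prime_gt0.
Qed.

Unset Implicit Arguments.

Theorem lemma3 (k : nat) (Ls : 'I_k.-1 -> 'I_k -> 'I_k -> 'I_k) :
  prime_power k ->
  (forall s, latin (Ls s)) ->
  (forall s t, s != t -> orthogonal (Ls s) (Ls t)) ->
  copnum_eq (classical_win (Gadj Ls)) k /\
  copnum_le (restrictive_win (Gadj Ls)) k.+1 /\
  copnum_ge (edge_win (Gadj Ls)) (k * (k - 1)).
Proof.
move=> /prime_power_gt1 k_gt1 Ls_latin Ls_orth.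
have sym := @Gadj_sym k Ls.
have bip := @Gadj_side k Ls.
have C4_free := Gadj_common_nbhd Ls_latin Ls_orth.
have deg_k := Gadj_nbhd_min Ls_latin k_gt1.
have x0 : Gvert k := inr (inl (Ordinal (ltnW k_gt1))).
have classical_lb := classical_lower sym bip C4_free deg_k x0.
have edge_lb := edge_lower sym bip C4_free deg_k x0.
split; [split | split].
- exact: classical_upper.
- by move=> m; apply: classical_lb.
- by exists k.+1; split=> //; apply: restrictive_upper.
- by move=> m; apply: edge_lb.
Qed.
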